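(* Let $n\ge 1$, $U_n$ the family of bounded subsets of $\mathbb R^n$, $H\subset\mathbb R^n$ locally finite, and $\mu_H:U_n\to B_2$, $\mu_H(A)=\pi(|A\cap H|)$. Then for every $A\in U_n$ and every $x\in A$ there exist $\varepsilon>0$ and $a\in B_2$ such that for every $B\in U_n$ with $x\in B$ and $d(B)<\varepsilon$ one has $\mu_H(B)=a$.
   Context: $B_2=\{0,1\}$. $H$ is locally finite if $A\cap H$ is finite for every bounded $A$. $\pi(m)=1$ if $m$ is odd and $0$ if $m$ is even. For a bounded $B\subset\mathbb R^n$, its diameter is $d(B)=\sup_{x,y\in B}\|x-y\|$ with $\|\cdot\|$ the Euclidean norm. *)

From mathcomp Require Import all_boot all_order all_algebra.
From mathcomp Require Import finmap all_classical all_reals.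
Set Implicit Arguments. Unset Strict Implicit. Unset Printing Implicit Defensive.
Import Order.TTheory GRing.Theory Num.Theory.
Local Open Scope classical_set_scope.
Local Open Scope ring_scope.
Local Open Scope fset_scope.

Definition enorm (R : realType) (n : nat) (x : 'rV[R]_n) : R :=
  Num.sqrt (\sum_(i < n) x ord0 i ^+ 2).

Definition ebounded (R : realType) (n : nat) (A : set 'rV[R]_n) : Prop :=
  exists M : R, forall x, A x -> enorm x <= M.

Definition locally_finite (R : realType) (n : nat) (H : set 'rV[R]_n) : Prop :=
  forall A, ebounded A -> finite_set (A `&` H).

(* pi(m) = 1 iff m odd; B_2 = bool. *)
Definition parity (m : nat) : bool := odd m.

Definition muH (R : realType) (n : nat) (H A : set 'rV[R]_n) : bool :=
  parity #|` fset_set (A `&` H)|.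

Definition diam (R : realType) (n : nat) (B : set 'rV[R]_n) : R :=
  sup [set enorm (x - y) | x in B & y in B].

(** Local finiteness makes every point isolated from the rest of [H]: the unit
    ball around [x] meets [H] in finitely many points, so there is an [eps > 0]
    below the distance from [x] to each of them other than [x].  A bounded set
    [B] containing [x] with diameter smaller than [eps] then meets [H] exactly
    in [[set x] `&` H], hence [muH H B = muH H [set x]]. *)

From mathcomp Require Import all_boot all_order all_algebra.
From mathcomp Require Import finmap all_classical all_reals.
From mathcomp Require Import lra.
Import Order.TTheory GRing.Theory Num.Theory.
Local Open Scope classical_set_scope.
Local Open Scope ring_scope.

Set Implicit Arguments.
Unset Strict Implicit.
Unset Printing Implicit Defensive.

Section SmallSets.
Variables (R : realType) (n : nat).
Implicit Types (x y z : 'rV[R]_n).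

Lemma enorm_ge0 z : 0 <= enorm z.
Proof. exact: sqrtr_ge0. Qed.

Lemma enormN z : enorm (- z) = enorm z.
Proof. by congr Num.sqrt; apply: eq_bigr => i _; rewrite mxE sqrrN. Qed.

Lemma enorm_sq z : enorm z ^+ 2 = \sum_(i < n) z ord0 i ^+ 2.
Proof. by rewrite sqr_sqrtr // sumr_ge0 // => i _; rewrite sqr_ge0. Qed.

Lemma enorm_eq0 z : (enorm z == 0) = (z == 0).
Proof.
apply/idP/eqP => [|->]; last first.
  by rewrite /enorm big1 ?sqrtr0 // => i _; rewrite mxE expr0n.
rewrite -sqrf_eq0 enorm_sq psumr_eq0 => [/allP z0|i _]; last exact: sqr_ge0.
apply/rowP => i; rewrite mxE; apply/eqP.
by rewrite -sqrf_eq0; apply: z0; rewrite mem_index_enum.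
Qed.

(* A weak triangle inequality, enough for boundedness: it only needs
   [(u + v)^2 <= 2 u^2 + 2 v^2] coordinatewise. *)
Lemma enormD_le2 y z : enorm (y + z) <= 2 * (enorm y + enorm z).
Proof.
have sq_le : enorm (y + z) ^+ 2 <= 2 * enorm y ^+ 2 + 2 * enorm z ^+ 2.
  rewrite !enorm_sq !mulr_sumr -big_split /=.
  apply: ler_sum => i _; rewrite mxE.
  have := sqr_ge0 (y ord0 i - z ord0 i); rewrite sqrrB; nra.
have := enorm_ge0 y; have := enorm_ge0 z; have := enorm_ge0 (y + z); nra.
Qed.

Lemma ebounded_ball x (r : R) : ebounded [set y | enorm (y - x) < r].
Proof.
exists (2 * (r + enorm x)) => y /= yx.
have := enormD_le2 (y - x) x; rewrite subrK => /le_trans; apply.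
by rewrite ler_pM2l // lerD2r ltW.
Qed.

Lemma enorm_le_diam (B : set 'rV[R]_n) y z :
  ebounded B -> B y -> B z -> enorm (y - z) <= diam B.
Proof.
move=> [M leM] By Bz; apply: ub_le_sup; last by exists y => //; exists z.
exists (2 * (M + M)) => _ [u Bu [v Bv <-]].
apply: (le_trans (enormD_le2 u (- v))); rewrite enormN ler_pM2l //.
by rewrite lerD ?leM.
Qed.

Lemma seq_enorm_sep x (s : seq 'rV[R]_n) :
  exists2 eps : R, 0 < eps & forall y, y \in s -> y != x -> eps <= enorm (y - x).
Proof.
elim: s => [|y s [eps eps_gt0 sep_s]]; first by exists 1.
have [-> | yx] := eqVneq y x.
  by exists eps => // z; rewrite inE => /predU1P [->|/sep_s]; rewrite ?eqxx.
have yx_gt0 : 0 < enorm (y - x) by rewrite lt_def enorm_eq0 subr_eq0 yx enorm_ge0.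
exists (Num.min eps (enorm (y - x))); first by rewrite lt_min eps_gt0 yx_gt0.
move=> z; rewrite inE ge_min => /predU1P [-> _|/sep_s sep_z /sep_z ->//].
by rewrite lexx orbT.
Qed.

Lemma locally_finite_sep (H : set 'rV[R]_n) x : locally_finite H ->
  exists2 eps : R, 0 < eps & forall y, H y -> y != x -> eps <= enorm (y - x).
Proof.
move=> /(_ _ (ebounded_ball x 1)) finH.
have [eps eps_gt0 sep] := seq_enorm_sep x (fset_set ([set y | enorm (y - x) < 1] `&` H)).
exists (Num.min eps 1); first by rewrite lt_min eps_gt0 ltr01.
move=> y Hy yx.
have [y_far | y_near] := leP 1 (enorm (y - x)); first by rewrite ge_min y_far orbT.
by rewrite ge_min sep // in_fset_set //; apply/mem_set.
Qed.

Lemma small_diam_meet (H B : set 'rV[R]_n) x (eps : R) :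
  (forall y, H y -> y != x -> eps <= enorm (y - x)) ->
  ebounded B -> B x -> diam B < eps -> B `&` H = [set x] `&` H.
Proof.
move=> sep bB Bx diamB; apply/seteqP; split => y [By Hy]; last by move: By Hy => /= ->.
split => //; apply/eqP; apply: contraTT diamB => yx; rewrite -leNgt.
exact: le_trans (sep _ Hy yx) (enorm_le_diam bB By Bx).
Qed.

End SmallSets.

Theorem proposition5p7 (R : realType) (n : nat) (hn : (1 <= n)%N)
    (H : set 'rV[R]_n) (hH : locally_finite H) :
  forall A : set 'rV[R]_n, ebounded A ->
  forall x : 'rV[R]_n, A x ->
  exists eps : R, 0 < eps /\
  exists a : bool, forall B : set 'rV[R]_n,
    ebounded B -> B x -> diam B < eps -> muH H B = a.
Proof.
move=> A _ x _.
have [eps eps_gt0 sep] := locally_finite_sep x hH.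
exists eps; split => //; exists (muH H [set x]) => B bB Bx diamB.
by rewrite /muH (small_diam_meet sep bB Bx diamB).
Qed.
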